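(* (Homomorphism Theorem) Let $\mathbf L_1=(L_1,\vee,\wedge)$ and $\mathbf L_2=(L_2,\vee,\wedge)$ be partial lattices and $h$ a closed homomorphism from $\mathbf L_1$ to $\mathbf L_2$. Then $\ker h\in\operatorname{Con}\mathbf L_1$. If, in addition, $[0_{\mathbf L_1^*}]\Theta(\ker h)=\{0_{\mathbf L_1^*}\}$ provided $0_{\mathbf L_1^*}\in L_1^*$, and $[1_{\mathbf L_1^*}]\Theta(\ker h)=\{1_{\mathbf L_1^*}\}$ provided $1_{\mathbf L_1^*}\in L_1^*$, then $(h(L_1),\vee,\wedge)$, with partial operations as in $\mathbf L_2$ (i.e. $h(a)\vee h(b)$ is defined iff it is defined in $\mathbf L_2$, with the same value, and likewise for $\wedge$), is a partial lattice isomorphic to $\mathbf L_1/(\ker h)$, via $h(x)\mapsto[x]\ker h$.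
   Context: A partial lattice is a set $L$ with two partial binary operations $\vee,\wedge$ satisfying strong idempotency, commutativity and associativity (for every assignment, one side is defined iff the other is, and then they are equal) and the duality conditions: if $a\vee b$ is defined and equals $a$ then $a\wedge b$ is defined and equals $b$, and dually. Its induced order is $x\leq y$ iff $x\vee y$ is defined and equals $y$. The two-point extension $\mathbf L^*=(L^*,\leq^* )$, with new elements $0_{\mathbf L^*},1_{\mathbf L^*}\notin L$: $L^*$ is $L$ together with a new top element $1_{\mathbf L^*}$ if $\vee$ is not everywhere defined and a new bottom element $0_{\mathbf L^*}$ if $\wedge$ is not everywhere defined; $\leq^*$ extends $\leq$ by putting the new bottom below and the new top above all elements; it is a lattice with operations $\vee^*=\sup_{\leq^*}$, $\wedge^*=\inf_{\leq^*}$. A congruence on $\mathbf L$ is an equivalence relation $E$ on $L$ with $\Theta(E)\cap L^2=E$, where $\Theta(E)$ is the lattice congruence on $\mathbf L^*$ generated by $E$; $\operatorname{Con}\mathbf L$ is the set of these. For $E\in\operatorname{Con}\mathbf L$, $\mathbf L/E=(L/E,\vee,\wedge)$ with $[x]E\vee[y]E:=[x\vee^*y]\Theta(E)\cap L$ if this set is non-empty, undefined otherwise, and dually for $\wedge$. A homomorphism of partial algebras is a map $h$ such that whenever $f(a_1,\dots,a_n)$ is defined, $f(h(a_1),\dots,h(a_n))$ is defined and equals $h(f(a_1,\dots,a_n))$; it is closed if additionally definedness of $f(h(a_1),\dots,h(a_n))$ implies definedness of $f(a_1,\dots,a_n)$. An isomorphism is a bijective closed homomorphism. $\ker h=\{(x,y):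 h(x)=h(y)\}$. *)

From Stdlib Require Import ClassicalEpsilon.



Definition pop (T : Type) := T -> T -> option T.

Definition obind {A B : Type} (f : A -> option B) (o : option A) : option B :=
  match o with Some a => f a | None => None end.

(* Strong idempotency, commutativity, associativity
   ("one side defined iff the other is, and then equal"). *)
Definition s_idem {T} (f : pop T) := forall a, f a a = Some a.
Definition s_comm {T} (f : pop T) := forall a b, f a b = f b a.
Definition s_assoc {T} (f : pop T) :=
  forall a b c, obind (fun d => f d c) (f a b) = obind (fun d => f a d) (f b c).

Definition is_partial_lattice {T} (j m : pop T) : Prop :=
  s_idem j /\ s_idem m /\ s_comm j /\ s_comm m /\ s_assoc j /\ s_assoc m /\
  (forall a b, j a b = Some a -> m a b = Some b) /\
  (forall a b, m a b = Some a -> j a b = Some b).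

Definition total {T} (f : pop T) := forall a b, exists c, f a b = Some c.

(* Two-point extension L^* : carrier elements of ext T that satisfy inLs. *)
Inductive ext (T : Type) := Bot | Elt (x : T) | Top.
Arguments Bot {T}.
Arguments Top {T}.
Arguments Elt {T} x.

Definition inLs {T} (j m : pop T) (u : ext T) : Prop :=
  match u with
  | Bot => ~ total m
  | Elt _ => True
  | Top => ~ total j
  end.

Definition leS {T} (j : pop T) (u v : ext T) : Prop :=
  match u, v with
  | Bot, _ => True
  | _, Top => True
  | Elt x, Elt y => j x y = Some y
  | _, _ => False
  end.

Definition is_sup {T} (j m : pop T) (a b s : ext T) : Prop :=
  inLs j m s /\ leS j a s /\ leS j b s /\
  forall u, inLs j m u -> leS j a u -> leS j b u -> leS j s u.

Definition is_inf {T} (j m : pop T) (a b s : ext T) : Prop :=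
  inLs j m s /\ leS j s a /\ leS j s b /\
  forall u, inLs j m u -> leS j u a -> leS j u b -> leS j u s.

Definition lcong {T} (j m : pop T) (R : ext T -> ext T -> Prop) : Prop :=
  (forall u v, R u v -> inLs j m u /\ inLs j m v) /\
  (forall u, inLs j m u -> R u u) /\
  (forall u v, R u v -> R v u) /\
  (forall u v w, R u v -> R v w -> R u w) /\
  (forall a b c d s t, inLs j m a -> inLs j m b -> inLs j m c -> inLs j m d ->
     R a b -> R c d -> is_sup j m a c s -> is_sup j m b d t -> R s t) /\
  (forall a b c d s t, inLs j m a -> inLs j m b -> inLs j m c -> inLs j m d ->
     R a b -> R c d -> is_inf j m a c s -> is_inf j m b d t -> R s t).

Definition Theta {T} (j m : pop T) (E : T -> T -> Prop) (u v : ext T) : Prop :=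
  forall R, lcong j m R -> (forall x y, E x y -> R (Elt x) (Elt y)) -> R u v.

Definition equivalence {T} (E : T -> T -> Prop) : Prop :=
  (forall x, E x x) /\ (forall x y, E x y -> E y x) /\
  (forall x y z, E x y -> E y z -> E x z).

Definition is_con {T} (j m : pop T) (E : T -> T -> Prop) : Prop :=
  equivalence E /\ forall x y, Theta j m E (Elt x) (Elt y) <-> E x y.

Definition qT {T} (E : T -> T -> Prop) := {A : T -> Prop | exists x, A = E x}.

Definition qclass {T} (E : T -> T -> Prop) (x : T) : qT E :=
  exist _ (E x) (ex_intro _ x eq_refl).

Definition qrep {T} {E : T -> T -> Prop} (A : qT E) : T :=
  proj1_sig (constructive_indefinite_description _ (proj2_sig A)).

(* [x]E v [y]E := [x v* y]Theta(E) cap L if non-empty (then it is the E-class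
   of any of its elements), undefined otherwise; dually for meet. *)
Definition qop {T} (j m : pop T) (E : T -> T -> Prop)
  (isx : pop T -> pop T -> ext T -> ext T -> ext T -> Prop) : pop (qT E) :=
  fun A B =>
    let C := fun z => exists s, isx j m (Elt (qrep A)) (Elt (qrep B)) s
                               /\ Theta j m E s (Elt z) in
    match excluded_middle_informative (exists z, C z) with
    | left H => Some (qclass E (proj1_sig (constructive_indefinite_description _ H)))
    | right _ => None
    end.

Definition qjoin {T} (j m : pop T) (E : T -> T -> Prop) : pop (qT E) :=
  qop j m E (fun j m => is_sup j m).
Definition qmeet {T} (j m : pop T) (E : T -> T -> Prop) : pop (qT E) :=
  qop j m E (fun j m => is_inf j m).

Definition is_hom {T1 T2} (j1 m1 : pop T1) (j2 m2 : pop T2) (h : T1 -> T2) :=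
  (forall a b c, j1 a b = Some c -> j2 (h a) (h b) = Some (h c)) /\
  (forall a b c, m1 a b = Some c -> m2 (h a) (h b) = Some (h c)).

Definition is_closed_hom {T1 T2} (j1 m1 : pop T1) (j2 m2 : pop T2) (h : T1 -> T2) :=
  is_hom j1 m1 j2 m2 h /\
  (forall a b, j2 (h a) (h b) <> None -> j1 a b <> None) /\
  (forall a b, m2 (h a) (h b) <> None -> m1 a b <> None).

Definition bijective {A B} (f : A -> B) :=
  (forall x y, f x = f y -> x = y) /\ (forall y, exists x, f x = y).

Definition is_iso {T1 T2} (j1 m1 : pop T1) (j2 m2 : pop T2) (h : T1 -> T2) :=
  bijective h /\ is_closed_hom j1 m1 j2 m2 h.

Definition ker {T1 T2} (h : T1 -> T2) : T1 -> T1 -> Prop := fun x y => h x = h y.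

Definition img {T1 T2} (h : T1 -> T2) := {y : T2 | exists x, h x = y}.

Definition iop {T1 T2} (h : T1 -> T2) (f : pop T2) : pop (img h) :=
  fun a b =>
    match f (proj1_sig a) (proj1_sig b) with
    | Some c =>
        match excluded_middle_informative (exists x, h x = c) with
        | left H => Some (exist _ c H)
        | right _ => None
        end
    | None => None
    end.

From Stdlib Require Import ProofIrrelevance ClassicalEpsilon.

(* A closed homomorphism h extends to L1^* -> L2^* by fixing the new bounds, and
   the extension preserves the joins and meets of the lattices L^*: an undefined
   join in L1 stays undefined in L2, so both become the new top.  Hence the kernel
   of the extension is a lattice congruence of L1^* containing ker h, which
   forces Theta(ker h) restricted to L1 to be ker h.  If moreover the new bounds
   form singleton Theta(ker h)-classes, the quotient join [x] v [y] is defined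
   exactly when x v y is, with value [x v y] (and dually), so h(x) |-> [x] is a
   closed bijective homomorphism.  Meets are reduced to joins by reversing the
   order of L^*, which exchanges the roles of v and ^. *)

Lemma partial_lattice_dual T (j m : pop T) :
  is_partial_lattice j m -> is_partial_lattice m j.
Proof. intros (Ij & Im & Cj & Cm & Aj & Am & Djm & Dmj). repeat split; assumption. Qed.

Section PartialLattice.

Variables (T : Type) (j m : pop T).
Hypothesis PL : is_partial_lattice j m.

Lemma join_ub_l x y z : j x y = Some z -> j x z = Some z.
Proof.
  destruct PL as (Ij & _ & _ & _ & Aj & _). intros Hxy.
  pose proof (Aj x x y) as A. rewrite Ij, Hxy in A. simpl in A. now rewrite <- A.
Qed.

Lemma join_ub_r x y z : j x y = Some z -> j y z = Some z.
Proof. destruct PL as (_ & _ & Cj & _). rewrite Cj. apply join_ub_l. Qed.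

Lemma join_lub x y z w :
  j x y = Some z -> j x w = Some w -> j y w = Some w -> j z w = Some w.
Proof.
  destruct PL as (_ & _ & _ & _ & Aj & _). intros Hxy Hxw Hyw.
  pose proof (Aj x y w) as A. rewrite Hxy, Hyw in A. simpl in A. congruence.
Qed.

Lemma join_undef_no_ub x y w :
  j x y = None -> j x w = Some w -> j y w = Some w -> False.
Proof.
  destruct PL as (_ & _ & _ & _ & Aj & _). intros Hxy Hxw Hyw.
  pose proof (Aj x y w) as A. rewrite Hxy, Hyw in A. simpl in A. congruence.
Qed.

Lemma join_eq_r_meet x y : j x y = Some y <-> m y x = Some x.
Proof.
  destruct PL as (_ & _ & Cj & Cm & _ & _ & Djm & Dmj). split; intros H.
  - rewrite Cj in H. now apply Djm.
  - rewrite Cm in H. now apply Dmj.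
Qed.

End PartialLattice.

Definition ext_flip {T} (u : ext T) : ext T :=
  match u with Bot => Top | Elt x => Elt x | Top => Bot end.

Lemma ext_flipK {T} (u : ext T) : ext_flip (ext_flip u) = u.
Proof. now destruct u. Qed.

Definition ext_join {T} (j : pop T) (a c : ext T) : ext T :=
  match a, c with
  | Bot, _ => c
  | _, Bot => a
  | Elt x, Elt y => match j x y with Some z => Elt z | None => Top end
  | _, _ => Top
  end.

Definition ext_meet {T} (m : pop T) (a c : ext T) : ext T :=
  ext_flip (ext_join m (ext_flip a) (ext_flip c)).

Lemma inLs_flip {T} (j m : pop T) u : inLs m j (ext_flip u) <-> inLs j m u.
Proof. now destruct u. Qed.

Section ExtensionOrder.

Variables (T : Type) (j m : pop T).
Hypothesis PL : is_partial_lattice j m.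

Lemma leS_refl u : leS j u u.
Proof. destruct PL as (Ij & _). destruct u; simpl; auto. Qed.

Lemma leS_antisym u v : leS j u v -> leS j v u -> u = v.
Proof.
  destruct PL as (_ & _ & Cj & _).
  destruct u, v; simpl; try tauto. rewrite Cj. congruence.
Qed.

Lemma leS_flip u v : leS m (ext_flip v) (ext_flip u) <-> leS j u v.
Proof. destruct u, v; simpl; try tauto. symmetry. apply (join_eq_r_meet _ _ _ PL). Qed.

Lemma is_inf_flip a c s :
  is_inf j m a c s <-> is_sup m j (ext_flip a) (ext_flip c) (ext_flip s).
Proof.
  unfold is_inf, is_sup. rewrite inLs_flip, !leS_flip. split.
  - intros (Is & Ha & Hc & Hglb). repeat split; auto.
    intros u Iu Hau Hcu. rewrite <- (ext_flipK u) in Iu, Hau, Hcu |- *.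
    rewrite inLs_flip, !leS_flip in *. auto.
  - intros (Is & Ha & Hc & Hlub). repeat split; auto.
    intros u Iu Hua Huc. rewrite <- leS_flip.
    apply Hlub; [rewrite inLs_flip | rewrite leS_flip ..]; assumption.
Qed.

Lemma ext_join_Elt_is_sup x y :
  is_sup j m (Elt x) (Elt y) (ext_join j (Elt x) (Elt y)).
Proof.
  simpl. destruct (j x y) eqn:Hxy; repeat split; simpl.
  - exact (join_ub_l _ _ _ PL _ _ _ Hxy).
  - exact (join_ub_r _ _ _ PL _ _ _ Hxy).
  - intros [|w|] _ Hxw Hyw; simpl in *; auto.
    exact (join_lub _ _ _ PL _ _ _ _ Hxy Hxw Hyw).
  - intros Htot. destruct (Htot x y). congruence.
  - intros [|w|] _ Hxw Hyw; simpl in *; auto.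
    exact (join_undef_no_ub _ _ _ PL _ _ _ Hxy Hxw Hyw).
Qed.

Lemma ext_join_is_sup a c :
  inLs j m a -> inLs j m c -> is_sup j m a c (ext_join j a c).
Proof.
  intros Ia Ic. destruct a as [|x|], c as [|y|]; try apply ext_join_Elt_is_sup;
    repeat split; simpl; try assumption; try apply (leS_refl (Elt _));
    intros [] _; simpl; tauto.
Qed.

Lemma is_sup_ext_join a c s :
  inLs j m a -> inLs j m c -> is_sup j m a c s -> s = ext_join j a c.
Proof.
  intros Ia Ic (Is & Has & Hcs & Hs).
  destruct (ext_join_is_sup a c Ia Ic) as (It & Hat & Hct & Ht).
  apply leS_antisym; auto.
Qed.

End ExtensionOrder.

Lemma ext_meet_is_inf T (j m : pop T) :
  is_partial_lattice j m ->
  forall a c, inLs j m a -> inLs j m c -> is_inf j m a c (ext_meet m a c).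
Proof.
  intros PL a c Ia Ic. apply is_inf_flip; [exact PL|]. unfold ext_meet. rewrite ext_flipK.
  apply ext_join_is_sup; [now apply partial_lattice_dual | now apply inLs_flip ..].
Qed.

Lemma is_inf_ext_meet T (j m : pop T) :
  is_partial_lattice j m -> forall a c s, inLs j m a -> inLs j m c -> is_inf j m a c s ->
  s = ext_meet m a c.
Proof.
  intros PL a c s Ia Ic Hs. apply (is_inf_flip _ _ _ PL) in Hs.
  unfold ext_meet. rewrite <- (ext_flipK s). f_equal.
  apply (is_sup_ext_join _ m j);
    [now apply partial_lattice_dual | now apply inLs_flip .. | exact Hs].
Qed.

Definition closed_for {T1 T2} (f1 : pop T1) (f2 : pop T2) (h : T1 -> T2) : Prop :=
  (forall a b c, f1 a b = Some c -> f2 (h a) (h b) = Some (h c)) /\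
  (forall a b, f2 (h a) (h b) <> None -> f1 a b <> None).

Lemma is_closed_homE T1 T2 (j1 m1 : pop T1) (j2 m2 : pop T2) h :
  is_closed_hom j1 m1 j2 m2 h <-> closed_for j1 j2 h /\ closed_for m1 m2 h.
Proof. unfold is_closed_hom, is_hom, closed_for. tauto. Qed.

Definition ext_map {T1 T2} (h : T1 -> T2) (u : ext T1) : ext T2 :=
  match u with Bot => Bot | Elt x => Elt (h x) | Top => Top end.

Lemma ext_map_flip {T1 T2} (h : T1 -> T2) u :
  ext_map h (ext_flip u) = ext_flip (ext_map h u).
Proof. now destruct u. Qed.

Lemma ext_map_join {T1 T2} {j1 : pop T1} {j2 : pop T2} {h} :
  closed_for j1 j2 h ->
  forall a c, ext_map h (ext_join j1 a c) = ext_join j2 (ext_map h a) (ext_map h c).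
Proof.
  intros (Hhom & Hrefl) a c. destruct a as [|x|], c as [|y|]; simpl; auto.
  destruct (j1 x y) eqn:Hxy.
  - now rewrite (Hhom _ _ _ Hxy).
  - destruct (j2 (h x) (h y)) eqn:Hhxy; auto.
    exfalso. apply (Hrefl x y); congruence.
Qed.

Lemma ext_map_meet {T1 T2} {m1 : pop T1} {m2 : pop T2} {h} :
  closed_for m1 m2 h ->
  forall a c, ext_map h (ext_meet m1 a c) = ext_meet m2 (ext_map h a) (ext_map h c).
Proof.
  intros Hm a c. unfold ext_meet.
  now rewrite ext_map_flip, (ext_map_join Hm), !ext_map_flip.
Qed.

Lemma Theta_refl T (j m : pop T) E u : inLs j m u -> Theta j m E u u.
Proof. intros Iu R (_ & Rrefl & _) _. auto. Qed.

Lemma proj1_sig_inj {A} {P : A -> Prop} (u v : sig P) :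
  proj1_sig u = proj1_sig v -> u = v.
Proof. apply eq_sig_hprop. intros. apply proof_irrelevance. Qed.

Lemma qclass_ker_eq {T1 T2} (h : T1 -> T2) x y :
  h x = h y -> qclass (ker h) x = qclass (ker h) y.
Proof. intros Hxy. apply proj1_sig_inj. simpl. unfold ker. now rewrite Hxy. Qed.

Lemma qrep_qclass_ker {T1 T2} (h : T1 -> T2) x : h (qrep (qclass (ker h) x)) = h x.
Proof.
  unfold qrep. destruct constructive_indefinite_description as [r Hr]. simpl in *.
  apply (f_equal (fun P => P x)) in Hr. unfold ker in Hr. rewrite <- Hr. reflexivity.
Qed.

Section Kernel.

Variables (T1 T2 : Type) (j1 m1 : pop T1) (j2 m2 : pop T2) (h : T1 -> T2).
Hypothesis PL1 : is_partial_lattice j1 m1.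
Hypothesis CH : is_closed_hom j1 m1 j2 m2 h.

Definition ext_ker (u v : ext T1) : Prop :=
  inLs j1 m1 u /\ inLs j1 m1 v /\ ext_map h u = ext_map h v.

Lemma lcong_ext_ker : lcong j1 m1 ext_ker.
Proof.
  apply is_closed_homE in CH as [Cj Cm]. unfold lcong, ext_ker.
  refine (conj _ (conj _ (conj _ (conj _ (conj _ _))))).
  - intros u v (Iu & Iv & _). auto.
  - auto.
  - intros u v (Iu & Iv & Huv). auto.
  - intros u v w (Iu & _ & Huv) (_ & Iw & Hvw). repeat split; congruence.
  - intros a b c d s t Ia Ib Ic Id (_ & _ & Hab) (_ & _ & Hcd) Hs Ht.
    split; [apply Hs | split; [apply Ht |]].
    rewrite (is_sup_ext_join _ _ _ PL1 a c s), (is_sup_ext_join _ _ _ PL1 b d t),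
      !(ext_map_join Cj); auto; congruence.
  - intros a b c d s t Ia Ib Ic Id (_ & _ & Hab) (_ & _ & Hcd) Hs Ht.
    split; [apply Hs | split; [apply Ht |]].
    rewrite (is_inf_ext_meet _ _ _ PL1 a c s), (is_inf_ext_meet _ _ _ PL1 b d t),
      !(ext_map_meet Cm); auto; congruence.
Qed.

Lemma Theta_ker_ext_map u v : Theta j1 m1 (ker h) u v -> ext_map h u = ext_map h v.
Proof.
  intros Huv. apply (Huv _ lcong_ext_ker).
  intros x y Hxy. repeat split; simpl; congruence.
Qed.

Lemma ker_is_con : is_con j1 m1 (ker h).
Proof.
  split.
  - unfold equivalence, ker. repeat split; congruence.
  - intros x y. split.
    + intros Hxy. apply Theta_ker_ext_map in Hxy. simpl in Hxy. congruence.
    + intros Hxy R _ HR. now apply HR.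
Qed.

(* [o] is the new bound that the extended operation [isx] yields when [f x y] is
   undefined; the quotient operation then agrees with [f] on representatives
   as soon as [o] is not Theta-related to any element of L1. *)
Lemma qop_ker isx (f : pop T1) (o : ext T1) :
  (forall x y s, isx j1 m1 (Elt x) (Elt y) s ->
     s = match f x y with Some z => Elt z | None => o end) ->
  (forall x y z, f x y = Some z -> isx j1 m1 (Elt x) (Elt y) (Elt z)) ->
  (forall x y z, f x y = None -> ~ Theta j1 m1 (ker h) o (Elt z)) ->
  forall A B, qop j1 m1 (ker h) isx A B = option_map (qclass (ker h)) (f (qrep A) (qrep B)).
Proof.
  intros Hdet Hex Ho A B. unfold qop.
  destruct excluded_middle_informative as [Hne | Hempty].
  - destruct constructive_indefinite_description as [z [s [Hs Hsz]]]. simpl.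
    apply Hdet in Hs. destruct (f (qrep A) (qrep B)) as [w|] eqn:Hf; subst s.
    + cbn [option_map]. f_equal. apply qclass_ker_eq.
      apply Theta_ker_ext_map in Hsz. simpl in Hsz. congruence.
    + contradiction (Ho _ _ _ Hf Hsz).
  - destruct (f (qrep A) (qrep B)) as [w|] eqn:Hf; [|reflexivity].
    exfalso. apply Hempty. exists w, (Elt w). split.
    + now apply Hex.
    + now apply Theta_refl.
Qed.

Lemma qjoin_ker :
  (inLs j1 m1 Top -> forall u, Theta j1 m1 (ker h) Top u -> u = Top) ->
  forall A B, qjoin j1 m1 (ker h) A B = option_map (qclass (ker h)) (j1 (qrep A) (qrep B)).
Proof.
  intros HTop. apply qop_ker with (o := Top).
  - intros x y s Hs. exact (is_sup_ext_join _ _ _ PL1 (Elt x) (Elt y) s I I Hs).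
  - intros x y z Hxy. pose proof (ext_join_Elt_is_sup _ _ _ PL1 x y) as Hsup.
    simpl in Hsup. now rewrite Hxy in Hsup.
  - intros x y z Hxy Hz. enough (Elt z = Top) by discriminate.
    apply HTop; [intros Htot; destruct (Htot x y); congruence | exact Hz].
Qed.

Lemma qmeet_ker :
  (inLs j1 m1 Bot -> forall u, Theta j1 m1 (ker h) Bot u -> u = Bot) ->
  forall A B, qmeet j1 m1 (ker h) A B = option_map (qclass (ker h)) (m1 (qrep A) (qrep B)).
Proof.
  intros HBot. apply qop_ker with (o := Bot).
  - intros x y s Hs. rewrite (is_inf_ext_meet _ _ _ PL1 (Elt x) (Elt y) s I I Hs).
    unfold ext_meet. simpl. now destruct (m1 x y).
  - intros x y z Hxy. pose proof (ext_meet_is_inf _ _ _ PL1 (Elt x) (Elt y) I I) as Hinf.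
    unfold ext_meet in Hinf. simpl in Hinf. now rewrite Hxy in Hinf.
  - intros x y z Hxy Hz. enough (Elt z = Bot) by discriminate.
    apply HBot; [intros Htot; destruct (Htot x y); congruence | exact Hz].
Qed.

End Kernel.

Definition img_closed {T1 T2} (h : T1 -> T2) (f : pop T2) : Prop :=
  forall a b c, f (h a) (h b) = Some c -> exists x, h x = c.

Section Image.

Variables (T1 T2 : Type) (h : T1 -> T2).

Local Notation img_val := (@proj1_sig T2 (fun y => exists x, h x = y)).

Lemma closed_for_img_closed (f1 : pop T1) (f2 : pop T2) :
  closed_for f1 f2 h -> img_closed h f2.
Proof.
  intros (Hhom & Hrefl) a b c Habc. destruct (f1 a b) as [z|] eqn:Hz.
  - exists z. rewrite (Hhom _ _ _ Hz) in Habc. congruence.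
  - exfalso. apply (Hrefl a b); congruence.
Qed.

Lemma iop_val (f : pop T2) : img_closed h f ->
  forall a b, option_map img_val (iop h f a b) = f (proj1_sig a) (proj1_sig b).
Proof.
  intros Hcl [ya pa] [yb pb]. unfold iop. simpl.
  destruct (f ya yb) as [c|] eqn:Hc; [|reflexivity].
  destruct excluded_middle_informative as [Hc_img | Hno]; [reflexivity|].
  exfalso. apply Hno. destruct pa as [xa <-], pb as [xb <-]. exact (Hcl _ _ _ Hc).
Qed.

Lemma option_map_proj1_sig_inj (o1 o2 : option (img h)) :
  option_map img_val o1 = option_map img_val o2 -> o1 = o2.
Proof.
  destruct o1, o2; simpl; intros H; try discriminate; [|reflexivity].
  f_equal. apply proj1_sig_inj. congruence.
Qed.

Lemma iop_partial_lattice (j m : pop T2) :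
  is_partial_lattice j m -> img_closed h j -> img_closed h m ->
  is_partial_lattice (iop h j) (iop h m).
Proof.
  intros (Ij & Im & Cj & Cm & Aj & Am & Djm & Dmj) Hj Hm.
  pose proof (iop_val j Hj) as Vj. pose proof (iop_val m Hm) as Vm.
  assert (Vbind : forall (o : option (img h)) g g',
    (forall d, option_map img_val (g d) = g' (proj1_sig d)) ->
    option_map img_val (obind g o) = obind g' (option_map img_val o)).
  { intros [d|] g g' Hg; simpl; auto. }
  unfold is_partial_lattice, s_idem, s_comm, s_assoc.
  repeat split; intros; apply option_map_proj1_sig_inj.
  - rewrite Vj. apply Ij.
  - rewrite Vm. apply Im.
  - rewrite !Vj. apply Cj.
  - rewrite !Vm. apply Cm.
  - rewrite (Vbind _ (fun d => iop h j d c) (fun d => j d (img_val c))),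
      (Vbind _ (iop h j a) (j (img_val a))), !Vj by (intros; apply Vj).
    apply Aj.
  - rewrite (Vbind _ (fun d => iop h m d c) (fun d => m d (img_val c))),
      (Vbind _ (iop h m a) (m (img_val a))), !Vm by (intros; apply Vm).
    apply Am.
  - rewrite Vm. apply Djm. apply (f_equal (option_map img_val)) in H.
    now rewrite Vj in H.
  - rewrite Vj. apply Dmj. apply (f_equal (option_map img_val)) in H.
    now rewrite Vm in H.
Qed.

Definition img_rep (y : img h) : T1 :=
  proj1_sig (constructive_indefinite_description _ (proj2_sig y)).

Lemma h_img_rep y : h (img_rep y) = proj1_sig y.
Proof. unfold img_rep. now destruct constructive_indefinite_description. Qed.

Definition img_class (y : img h) : qT (ker h) := qclass (ker h) (img_rep y).

Lemma h_qrep_img_class y : h (qrep (img_class y)) = proj1_sig y.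
Proof. unfold img_class. now rewrite qrep_qclass_ker, h_img_rep. Qed.

Lemma img_class_bijective : bijective img_class.
Proof.
  split.
  - intros y1 y2 Hy. apply proj1_sig_inj.
    now rewrite <- (h_qrep_img_class y1), <- (h_qrep_img_class y2), Hy.
  - intros [P [x ->]]. exists (exist _ (h x) (ex_intro _ x eq_refl)).
    unfold img_class. apply qclass_ker_eq. apply h_img_rep.
Qed.

Lemma img_class_closed_for (f1 : pop T1) (f2 : pop T2) (q : pop (qT (ker h))) :
  closed_for f1 f2 h ->
  (forall A B, q A B = option_map (qclass (ker h)) (f1 (qrep A) (qrep B))) ->
  closed_for (iop h f2) q img_class.
Proof.
  intros Hcl Hq. pose proof (iop_val f2 (closed_for_img_closed f1 f2 Hcl)) as V.
  destruct Hcl as (Hhom & Hrefl). split.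
  - intros a b c Habc. rewrite Hq.
    apply (f_equal (option_map img_val)) in Habc. rewrite V in Habc. simpl in Habc.
    rewrite <- (h_qrep_img_class a), <- (h_qrep_img_class b) in Habc.
    destruct (f1 (qrep (img_class a)) (qrep (img_class b))) as [z|] eqn:Hz.
    + rewrite (Hhom _ _ _ Hz) in Habc. simpl. f_equal.
      apply qclass_ker_eq. rewrite h_img_rep. congruence.
    + exfalso. apply (Hrefl (qrep (img_class a)) (qrep (img_class b))); congruence.
  - intros a b Hdef Hundef. apply Hdef. rewrite Hq.
    destruct (f1 (qrep (img_class a)) (qrep (img_class b))) as [z|] eqn:Hz; [|reflexivity].
    exfalso. pose proof (Hhom _ _ _ Hz) as Himg. rewrite !h_qrep_img_class in Himg.
    apply (f_equal (option_map img_val)) in Hundef. rewrite V in Hundef. simpl in Hundef.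
    congruence.
Qed.

End Image.

Theorem mainTheorem8 (T1 T2 : Type) (j1 m1 : pop T1) (j2 m2 : pop T2)
  (h : T1 -> T2) :
  is_partial_lattice j1 m1 -> is_partial_lattice j2 m2 ->
  is_closed_hom j1 m1 j2 m2 h ->
  is_con j1 m1 (ker h) /\
  ((inLs j1 m1 Bot -> forall u, Theta j1 m1 (ker h) Bot u -> u = Bot) ->
   (inLs j1 m1 Top -> forall u, Theta j1 m1 (ker h) Top u -> u = Top) ->
   (* the operations of L2 restricted to h(L1) take values in h(L1) *)
   (forall a b c, j2 (h a) (h b) = Some c -> exists x, h x = c) /\
   (forall a b c, m2 (h a) (h b) = Some c -> exists x, h x = c) /\
   is_partial_lattice (iop h j2) (iop h m2) /\
   exists phi : img h -> qT (ker h),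
     (forall x (p : exists x', h x' = h x),
        phi (exist _ (h x) p) = qclass (ker h) x) /\
     is_iso (iop h j2) (iop h m2) (qjoin j1 m1 (ker h)) (qmeet j1 m1 (ker h)) phi).
Proof.
  intros PL1 PL2 CH.
  pose proof CH as Cjm. apply is_closed_homE in Cjm as [Cj Cm].
  split; [exact (ker_is_con _ _ _ _ _ _ _ PL1 CH)|]. intros HBot HTop.
  pose proof (closed_for_img_closed _ _ _ _ _ Cj) as Ij.
  pose proof (closed_for_img_closed _ _ _ _ _ Cm) as Im.
  split; [exact Ij|]. split; [exact Im|].
  split; [exact (iop_partial_lattice _ _ _ _ _ PL2 Ij Im)|].
  exists (img_class _ _ h). split.
  - intros x p. apply qclass_ker_eq. apply h_img_rep.
  - split; [apply img_class_bijective|]. apply is_closed_homE. split.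
    + apply img_class_closed_for with j1; [exact Cj|].
      exact (qjoin_ker _ _ _ _ _ _ _ PL1 CH HTop).
    + apply img_class_closed_for with m1; [exact Cm|].
      exact (qmeet_ker _ _ _ _ _ _ _ PL1 CH HBot).
Qed.
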